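(* Let $k=2r+1$ with $r\geq1$ and $G=BS(1,k)$. Let $c_0(n)$ be the number of conjugacy classes of $G$ contained in the subgroup $\mathbb{Z}[1/k]$ whose length with respect to $\{a,t\}$ is $n$. Then the growth rate $\limsup_n c_0(n)^{1/n}$ of these conjugacy classes lies in the open interval $(\frac{4}{3},2)$.
   Context: $BS(1,k)=\langle a,t\mid tat^{-1}=a^k\rangle\cong \mathbb{Z}[1/k]\rtimes\mathbb{Z}$ via $a\mapsto(1,0)$, $t\mapsto(0,1)$, with the generator of $\mathbb{Z}$ acting by multiplication by $k$; $\mathbb{Z}[1/k]=\{(x,0)\}$ is a normal subgroup. The length of a conjugacy class is the minimal word length of its elements. The growth rate is the reciprocal of the radius of convergence of $\sum c_0(n)z^n$. *)

From HB Require Import structures.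
From mathcomp Require Import all_boot all_order all_algebra.
From mathcomp Require Import all_classical all_reals.
From mathcomp Require Import finmap ereal topology normedtype sequences exp.
Set Implicit Arguments. Unset Strict Implicit. Unset Printing Implicit Defensive.
Import Order.TTheory GRing.Theory Num.Theory.
Local Open Scope ring_scope.
Local Open Scope classical_set_scope.

(* BS(1,k) = Z[1/k] ⋊ Z, modelled inside rat * int.  An element (x, m)
   with x in Z[1/k]; the generator of Z acts on Z[1/k] by multiplication by k. *)

Definition Zinvk (k : nat) (x : rat) : Prop :=
  exists (z : int) (j : nat), x = z%:~R / (k%:R ^+ j).

Definition BS_elt (k : nat) (p : rat * int) : Prop := Zinvk k p.1.

Definition bs_mul (k : nat) (p q : rat * int) : rat * int :=
  (p.1 + (k%:R : rat) ^ p.2 * q.1, p.2 + q.2)%R.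
Definition bs_one : rat * int := (0, 0).
Definition bs_inv (k : nat) (p : rat * int) : rat * int :=
  (- ((k%:R : rat) ^ (- p.2) * p.1), - p.2)%R.

Definition bs_a : rat * int := (1, 0).
Definition bs_t : rat * int := (0, 1).

Inductive letter := La | LaI | Lt | LtI.

Definition letter_val (k : nat) (l : letter) : rat * int :=
  match l with
  | La => bs_a
  | LaI => bs_inv k bs_a
  | Lt => bs_t
  | LtI => bs_inv k bs_t
  end.

Definition word_eval (k : nat) (w : seq letter) : rat * int :=
  foldr (fun l acc => bs_mul k (letter_val k l) acc) bs_one w.

Definition conjclass (k : nat) (g : rat * int) : set (rat * int) :=
  [set bs_mul k (bs_mul k h g) (bs_inv k h) | h in BS_elt k].

Definition Zinvk_sub (k : nat) : set (rat * int) :=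
  [set p | Zinvk k p.1 /\ p.2 = 0%R].

Definition class_length (k : nat) (C : set (rat * int)) (n : nat) : Prop :=
  (exists w : seq letter, size w = n /\ C (word_eval k w)) /\
  (forall w : seq letter, C (word_eval k w) -> (n <= size w)%N).

Definition classes0 (k n : nat) : set (set (rat * int)) :=
  [set C | exists g, BS_elt k g /\ C = conjclass k g /\
                     C `<=` Zinvk_sub k /\ class_length k C n].

Definition c0 (k n : nat) : nat := (#|` fset_set (classes0 k n) |)%fset.

Definition growth0 (R : realType) (k : nat) : \bar R :=
  limn_esup (fun n => (((c0 k n)%:R : R) `^ (n%:R^-1))%:E).

From HB Require Import structures.
From mathcomp Require Import all_boot all_order all_algebra finmap.
From mathcomp Require Import all_classical all_reals.
From mathcomp Require Import ereal topology normedtype sequences exp.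
From mathcomp Require Import zify ring lra.
Import Order.TTheory GRing.Theory Num.Theory.
Local Open Scope ring_scope.
Local Open Scope classical_set_scope.

(* A conjugacy class of BS(1,k) inside Z[1/k] is an orbit {(k^j x, 0)}, so it is
   determined by any integer point of it, and it contains at most one integer not
   divisible by k.

   Upper bound: reading a word letter by letter, with the t-letters moving between
   the digit positions and the a-letters changing the current digit, a word of
   length n evaluating to (x, 0) yields k^j x = sum_i d_i k^i with
   sum_i (|d_i| + 2) <= n + 2.  Digit sequences of cost m are counted by a
   tribonacci-type recurrence (growth about 1.84), so c_0(n) <= 1.9^(n+2) and the
   growth rate is at most 1.95.

   Lower bound: for every digit sequence over {-1, 0, 1} of cost m, the integers
   +-1 + k * sum_i d_i k^i are pairwise distinct, not divisible by k, hence pairwise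
   non-conjugate, and are reached by words of length m + 3.  There are at least
   1.4^m of them, so the partial sums of c_0 grow like 1.4^n and c_0(n) >= 1.35^n
   infinitely often; 1.35 > 4/3. *)

Section Growth.
Variable R : realType.

Lemma bernoulli_ineq (x : R) (n : nat) : 0 <= x -> 1 + n%:R * x <= (1 + x) ^+ n.
Proof.
move=> x_ge0; elim: n => [|n IH]; first by rewrite mul0r addr0 expr0.
have pow_ge0 : 0 <= (1 + x) ^+ n by apply: exprn_ge0; lra.
have nx_ge0 : 0 <= n%:R * x by rewrite mulr_ge0.
rewrite exprS -natr1; nra.
Qed.

Lemma geometric_dominance (a b C : R) : 0 < b < a ->
  exists N, forall n, (N <= n)%N -> C * b ^+ n < a ^+ n.
Proof.
case/andP => b_gt0 b_lt_a; set q := a / b - 1.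
have q_gt0 : 0 < q by rewrite subr_gt0 ltr_pdivlMr // mul1r.
have Cq_ge0 : 0 <= `|C| / q by rewrite divr_ge0 // ltW.
exists (Num.Def.archi_bound (`|C| / q)) => n Nn.
have a_eq : a = b * (1 + q) by rewrite /q addrC subrK mulrC divfK ?gt_eqF.
rewrite a_eq exprMn mulrC ltr_pM2l ?exprn_gt0 //.
apply: lt_le_trans (bernoulli_ineq _ n (ltW q_gt0)).
have : `|C| / q < n%:R.
  by apply: lt_le_trans (archi_boundP Cq_ge0) _; rewrite ler_nat.
rewrite ltr_pdivrMr // => Cn.
have := ler_norm C; lra.
Qed.

Lemma frequently_ge_of_partial_sums (u : nat -> R) (a b : R) (d : nat) :
  1 < b < a -> (forall n, a ^+ n <= \sum_(j < d + n) u j) ->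
  forall N, exists2 n, (N <= n)%N & b ^+ n <= u n.
Proof.
case/andP => b_gt1 b_lt_a sum_ge N.
case: (pselect (exists2 n, (N <= n)%N & b ^+ n <= u n)) => // none.
(* Otherwise the partial sums are [O(b ^+ n)], which [a ^+ n] eventually beats. *)
have small n : (N <= n)%N -> u n < b ^+ n.
  by move=> Nn; rewrite ltNge; apply/negP => ge; apply: none; exists n.
set S := \sum_(0 <= j < N) u j.
have b1_gt0 : 0 < b - 1 by rewrite subr_gt0.
have sum_le M : (N <= M)%N -> \sum_(0 <= j < M) u j <= S + b ^+ M / (b - 1).
  move=> NM; rewrite -(subnK NM); elim: (M - N)%N => [|i IH].
    by rewrite add0n lerDl divr_ge0 ?exprn_ge0 // ?ltW // (lt_trans ltr01).
  rewrite addSn big_nat_recr //= exprS.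
  have := small (i + N)%N (leq_addl _ _).
  have -> : b * b ^+ (i + N) / (b - 1) = b ^+ (i + N) / (b - 1) + b ^+ (i + N).
    by field; rewrite subr_eq0 gt_eqF.
  lra.
have ab : 0 < b < a by apply/andP; split => //; lra.
have [n0 dom] := geometric_dominance a b (`|S| + b ^+ d / (b - 1)) ab.
set n := (n0 + N)%N.
have bn_ge1 : 1 <= b ^+ n by rewrite exprn_ege1 // ltW.
have S_le : S <= `|S| * b ^+ n by rewrite (le_trans (ler_norm S)) // ler_peMr.
have := sum_le (d + n)%N ltac:(rewrite /n; lia).
rewrite big_mkord exprD => upper.
have := sum_ge n; have := dom n (leq_addr _ _); lra.
Qed.

Lemma powR_invn_exprn (a : R) (n : nat) : (0 < n)%N -> 0 <= a ->
  (a ^+ n) `^ n%:R^-1 = a.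
Proof.
move=> n_gt0 a_ge0.
by rewrite -powR_mulrn // -powRrM mulfV ?powRr1 // pnatr_eq0 -lt0n.
Qed.

Lemma limn_esup_le_eventually (u : nat -> \bar R) (l : \bar R) (N : nat) :
  (forall n, (N <= n)%N -> (u n <= l)%E) -> (limn_esup u <= l)%E.
Proof.
move=> le_l; apply: (@le_trans _ _ (ereal_sup (u @` [set n : nat | (N <= n)%N]))).
  apply: ereal_inf_lbound; exists [set n : nat | (N <= n)%N] => //.
  exact: nbhs_infty_ge.
by apply: ge_ereal_sup => _ [n /= Nn <-]; apply: le_l.
Qed.

Lemma limn_esup_ge_frequently (u : nat -> \bar R) (l : \bar R) :
  (forall N, exists2 n, (N <= n)%N & (l <= u n)%E) -> (l <= limn_esup u)%E.
Proof.
move=> freq; apply: le_ereal_inf_tmp => _ [V [N _ NV] <-].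
have [n Nn l_le] := freq N.
by apply: le_trans l_le _; apply: ereal_sup_ubound; exists n => //; apply: NV.
Qed.

Lemma limn_esup_root_le (u : nat -> R) (a : R) (N : nat) : 0 <= a ->
  (forall n, (N <= n)%N -> 0 <= u n <= a ^+ n) ->
  (limn_esup (fun n => (u n `^ n%:R^-1)%:E) <= a%:E)%E.
Proof.
move=> a_ge0 le_a; apply: (@limn_esup_le_eventually _ _ N.+1) => n Nn.
have /andP[u_ge0 u_le] := le_a n (ltnW Nn).
rewrite lee_fin -[leRHS](powR_invn_exprn _ _ (leq_ltn_trans (leq0n N) Nn) a_ge0).
by apply: ge0_ler_powR; rewrite ?invr_ge0 ?nnegrE ?exprn_ge0.
Qed.

Lemma limn_esup_root_ge (u : nat -> R) (b : R) : 0 <= b -> (forall n, 0 <= u n) ->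
  (forall N, exists2 n, (N <= n)%N & b ^+ n <= u n) ->
  (b%:E <= limn_esup (fun n => (u n `^ n%:R^-1)%:E))%E.
Proof.
move=> b_ge0 u_ge0 freq; apply: limn_esup_ge_frequently => N.
have [n Nn b_le] := freq N.+1; exists n; first exact: ltnW.
rewrite lee_fin -[leLHS](powR_invn_exprn _ _ (leq_ltn_trans (leq0n N) Nn) b_ge0).
by apply: ge0_ler_powR; rewrite ?invr_ge0 ?nnegrE ?exprn_ge0.
Qed.

End Growth.

Lemma card_fset_set_le_size {T X : choiceType} (A : set T) (s : seq X) (f : X -> T) :
  A `<=` f @` [set` s] -> (#|` fset_set A| <= size s)%N.
Proof.
move=> A_sub; have [finA|infA] := pselect (finite_set A); last first.
  by rewrite /fset_set; case: pselect.
have sub : (fset_set A `<=` [fset f x | x in s])%fset.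
  apply/fsubsetP => t; rewrite in_fset_set // inE => /A_sub [x xs <-].
  by apply/imfsetP; exists x.
apply: leq_trans (fsubset_leq_card sub) _.
apply: leq_trans (leq_imfset_card _ _ _) _.
by rewrite /enum_finmem /= size_undup.
Qed.

Lemma size_le_card_fset_set {T X : choiceType} (A : set T) (s : seq X) (f : X -> T) :
  finite_set A -> uniq s -> {in s &, injective f} -> {in s, forall x, A (f x)} ->
  (size s <= #|` fset_set A|)%N.
Proof.
move=> finA s_uniq f_inj f_in.
have sub : ([fset f x | x in s] `<=` fset_set A)%fset.
  apply/fsubsetP => t /imfsetP [x /= xs ->].
  by rewrite in_fset_set // inE; apply: f_in.
apply: leq_trans (fsubset_leq_card sub).
rewrite card_in_imfset; first by rewrite /enum_finmem /= undup_id.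
by move=> x y xs ys; apply: f_inj.
Qed.

Section Conjugacy.
Variable k : nat.
Hypothesis k_gt0 : (0 < k)%N.
Local Notation K := (k%:R : rat).

Lemma K_neq0 : K != 0. Proof. by rewrite pnatr_eq0 -lt0n. Qed.

Lemma word_eval_cons l w : word_eval k (l :: w) = bs_mul k (letter_val k l) (word_eval k w).
Proof. by []. Qed.

Lemma mul_letter_a p : bs_mul k (letter_val k La) p = (1 + p.1, p.2).
Proof. by case: p => x e; rewrite /bs_mul /= expr0z mul1r add0r. Qed.

Lemma mul_letter_aI p : bs_mul k (letter_val k LaI) p = (-1 + p.1, p.2).
Proof. by case: p => x e; rewrite /bs_mul /= oppr0 expr0z !mul1r add0r. Qed.

Lemma mul_letter_t p : bs_mul k (letter_val k Lt) p = (K * p.1, 1 + p.2).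
Proof. by case: p => x e; rewrite /bs_mul /= expr1z add0r. Qed.

Lemma mul_letter_tI p : bs_mul k (letter_val k LtI) p = (K^-1 * p.1, -1 + p.2).
Proof. by case: p => x e; rewrite /bs_mul /= mulr0 oppr0 add0r exprN1. Qed.

Lemma word_eval_rcons_tI w :
  word_eval k (rcons w LtI) = ((word_eval k w).1, (word_eval k w).2 - 1).
Proof.
elim: w => [|l w IH]; first by rewrite /= mul_letter_tI /= mulr0 addr0 add0r.
rewrite rcons_cons !word_eval_cons IH.
by case: l; rewrite ?(mul_letter_a, mul_letter_aI, mul_letter_t, mul_letter_tI) /= ?addrA.
Qed.

Lemma conjclass_refl g : conjclass k g g.
Proof.
exists bs_one; first by exists 0, 0%N; rewrite /= mul0r.
case: g => x e; rewrite /bs_mul /bs_inv /bs_one /= !mulr0 oppr0 !addr0 add0r.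
by rewrite expr0z mul1r add0r.
Qed.

Lemma conjclass_Zinvk x :
  conjclass k (x, 0) = [set p | exists j : int, p = (K ^ j * x, 0)].
Proof.
apply/seteqP; split => p /=.
  move=> [[y j] _ <-]; exists j; rewrite /bs_mul /bs_inv /= !addr0 subrr.
  by rewrite mulrN mulrA -expfzDr ?K_neq0 // subrr expr0z mul1r addrAC subrr add0r.
move=> [j ->]; exists (0, j); first by exists 0, 0%N; rewrite /= mul0r.
by rewrite /bs_mul /bs_inv /= !addr0 subrr mulr0 oppr0 mulr0 addr0 add0r.
Qed.

Lemma conjclass_scale x (l : int) : conjclass k (K ^ l * x, 0) = conjclass k (x, 0).
Proof.
rewrite !conjclass_Zinvk; apply/seteqP; split => p /= [j ->].
  by exists (j + l); rewrite mulrA -expfzDr ?K_neq0.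
by exists (j - l); rewrite mulrA -expfzDr ?K_neq0 // subrK.
Qed.

Lemma conjclass_int_inj (y y' : int) : ~~ (k%:Z %| y)%Z -> ~~ (k%:Z %| y')%Z ->
  conjclass k (y%:~R, 0) = conjclass k (y'%:~R, 0) -> y = y'.
Proof.
move=> y_ndvd y'_ndvd eq_class.
have := conjclass_refl (y'%:~R, 0); rewrite -eq_class conjclass_Zinvk.
move=> [[[|n]|n] [eq_y]].
- by move: eq_y; rewrite expr0z mul1r => /intr_inj.
- have : y' = k%:Z ^+ n.+1 * y by apply: (@intr_inj rat); rewrite eq_y rmorphM rmorphXn.
  by move=> y'E; move: y'_ndvd; rewrite y'E exprS -mulrA dvdz_mulr.
- have : y = k%:Z ^+ n.+1 * y'.
    apply: (@intr_inj rat); rewrite rmorphM rmorphXn /= eq_y mulrA.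
    by rewrite -[_ ^+ n.+1]/(K ^ n.+1%:Z) -expfzDr ?K_neq0 // NegzE addrN expr0z mul1r.
  by move=> yE; move: y_ndvd; rewrite yE exprS -mulrA dvdz_mulr.
Qed.

Lemma Zinvk_scale_int (j y : int) : Zinvk k (K ^ j * y%:~R).
Proof.
case: j => n; first by exists (k%:Z ^+ n * y), 0%N; rewrite expr0 divr1 rmorphM rmorphXn.
by exists y, n.+1; rewrite NegzE -exprnN mulrC.
Qed.

Lemma class_length_unique C m n :
  class_length k C m -> class_length k C n -> m = n.
Proof.
move=> [[w [<- Cw]] min_w] [[w' [<- Cw']] min_w'].
by have := min_w w' Cw'; have := min_w' w Cw; lia.
Qed.

Lemma class_length_le C w : C (word_eval k w) ->
  exists2 m, (m <= size w)%N & class_length k C m.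
Proof.
move=> Cw; have ex : exists m, `[< exists w, size w = m /\ C (word_eval k w) >].
  by exists (size w); apply/asboolP; exists w.
case: (ex_minnP ex) => m /asboolP m_len m_min.
exists m; first by apply: m_min; apply/asboolP; exists w.
by split=> // w' Cw'; apply: m_min; apply/asboolP; exists w'.
Qed.

Lemma classes0_conjclass_int (y : int) w : word_eval k w = (y%:~R, 0) ->
  exists2 m, (m <= size w)%N & classes0 k m (conjclass k (y%:~R, 0)).
Proof.
move=> w_y; have y_in : conjclass k (y%:~R, 0) (word_eval k w).
  by rewrite w_y; apply: conjclass_refl.
have [m m_le len_m] := class_length_le _ _ y_in.
exists m => //; exists (y%:~R, 0); split; first by exists y, 0%N; rewrite divr1.
split=> //; split=> // p; rewrite conjclass_Zinvk => -[j ->].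
by split=> //; apply: Zinvk_scale_int.
Qed.

End Conjugacy.

Section Digits.
Variable k : nat.

Definition digits_val (ds : seq int) : int := foldr (fun d v => d + k%:Z * v) 0 ds.

Definition digits_cost (ds : seq int) : nat := (sumn (map absz ds) + 2 * size ds)%N.

Lemma digits_val_cat ds ds' :
  digits_val (ds ++ ds') = digits_val ds + k%:Z ^+ size ds * digits_val ds'.
Proof.
elim: ds => [|d ds IH] /=; first by rewrite add0r expr0 mul1r.
by rewrite IH exprS; ring.
Qed.

Lemma digits_cost_cons d ds : digits_cost (d :: ds) = (`|d| + 2 + digits_cost ds)%N.
Proof. rewrite /digits_cost /=; lia. Qed.

Lemma digits_cost_cat ds ds' :
  digits_cost (ds ++ ds') = (digits_cost ds + digits_cost ds')%N.
Proof. rewrite /digits_cost map_cat sumn_cat size_cat; lia. Qed.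

Lemma digits_cost_rev ds : digits_cost (rev ds) = digits_cost ds.
Proof. by rewrite /digits_cost map_rev sumn_rev size_rev. Qed.

End Digits.

Section WordExpansion.
Variable k : nat.
Hypothesis k_gt0 : (0 < k)%N.
Local Notation K := (k%:R : rat).

Fixpoint low_val (L : seq int) : rat :=
  if L is d :: L' then (d%:~R + low_val L') / K else 0.

Fixpoint high_val (H : seq int) : rat :=
  if H is d :: H' then K * (d%:~R + high_val H') else 0.

(* The state reached by a word of length [m]: [p.1] has the digit [c] at the units
   position, [L] below and [H] above it; the letters [a^+-1] change [c] and [t^+-1]
   move the units position.  The slack [`|p.2|] pays for the positions opened by
   [t^+-1] beyond the digits already present. *)
Definition cheap_expansion (m : nat) (p : rat * int) : Prop :=
  exists L c H, p.1 = c%:~R + low_val L + high_val H /\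
    (- (size L)%:Z <= p.2 <= (size H)%:Z) /\
    (digits_cost L + `|c| + digits_cost H <= m + `|p.2|)%N.

Lemma cheap_expansion_mul m l p :
  cheap_expansion m p -> cheap_expansion m.+1 (bs_mul k (letter_val k l) p).
Proof.
case: p => x e [L [c [H [/= x_eq [e_bounds cost]]]]].
case: l.
- rewrite mul_letter_a; exists L, (1 + c), H; rewrite x_eq rmorphD /= !addrA.
  by do 2!split=> //; lia.
- rewrite mul_letter_aI; exists L, (-1 + c), H; rewrite x_eq rmorphD /= !addrA.
  by do 2!split=> //; lia.
- rewrite mul_letter_t; case: L x_eq e_bounds cost => [|d L] x_eq e_bounds cost.
  + exists [::], 0, (c :: H); split; first by rewrite x_eq /= !addr0 add0r.
    by move: e_bounds cost; rewrite !digits_cost_cons /digits_cost /=; lia.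
  + exists L, d, (c :: H); split.
      by rewrite x_eq /=; field; apply: K_neq0.
    by move: e_bounds cost; rewrite !digits_cost_cons /=; lia.
- rewrite mul_letter_tI; case: H x_eq e_bounds cost => [|d H] x_eq e_bounds cost.
  + exists (c :: L), 0, [::]; split; first by rewrite x_eq /= !addr0 add0r mulrC.
    by move: e_bounds cost; rewrite !digits_cost_cons /digits_cost /=; lia.
  + exists (c :: L), d, H; split.
      by rewrite x_eq /=; field; apply: K_neq0.
    by move: e_bounds cost; rewrite !digits_cost_cons /=; lia.
Qed.

Lemma cheap_expansion_word w : cheap_expansion (size w) (word_eval k w).
Proof.
elim: w => [|l w IH]; last exact: cheap_expansion_mul.
by exists [::], 0, [::]; rewrite /= !addr0.
Qed.

Lemma high_val_digits H : high_val H = K * (digits_val k H)%:~R.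
Proof.
elim: H => [|d H IH] /=; first by rewrite mulr0.
by rewrite IH rmorphD rmorphM.
Qed.

Lemma low_val_digits L : K ^+ size L * low_val L = (digits_val k (rev L))%:~R.
Proof.
elim: L => [|d L IH] /=; first by rewrite mulr0.
rewrite rev_cons -cats1 digits_val_cat /= size_rev mulr0 addr0.
rewrite rmorphD rmorphM rmorphXn /= -IH exprS.
by field; apply: K_neq0.
Qed.

Lemma cheap_expansion_Zinvk m x : cheap_expansion m (x, 0) ->
  exists (j : nat) (ds : seq int),
    K ^+ j * x = (digits_val k ds)%:~R /\ (digits_cost ds <= m + 2)%N.
Proof.
move=> [L [c [H [/= x_eq [_ cost]]]]].
exists (size L), (rev L ++ c :: H); split.
  rewrite x_eq digits_val_cat /= !(rmorphD, rmorphM, rmorphXn) /= size_rev.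
  by rewrite -low_val_digits -high_val_digits; ring.
by rewrite digits_cost_cat digits_cost_rev digits_cost_cons; move: cost; lia.
Qed.

End WordExpansion.

(* [cost_tables k m] lists, with repetitions, the integers [digits_val k ds] with
   [digits_cost ds <= m] ([cheap]), the same for [m - 1] and [m - 2], and those of
   them whose lowest digit is [>= 0] ([cheap_nonneg]) or [< 0] ([cheap_neg]). *)
Record cost_table := CostTable {
  cheap : seq int; cheap_prev : seq int; cheap_prev2 : seq int;
  cheap_nonneg : seq int; cheap_neg : seq int }.

Section CostTables.
Variable k : nat.
Local Notation kz := (k%:Z).

Definition cost_table_step (s : cost_table) : cost_table :=
  let nonneg := [seq kz * y | y <- cheap_prev s] ++ [seq 1 + z | z <- cheap_nonneg s] in
  let neg := [seq -1 + kz * y | y <- cheap_prev2 s] ++ [seq -1 + z | z <- cheap_neg s] in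
  CostTable (0 :: nonneg ++ neg) (cheap s) (cheap_prev s) nonneg neg.

Fixpoint cost_tables (m : nat) : cost_table :=
  if m is m'.+1 then cost_table_step (cost_tables m')
  else CostTable [:: 0] [::] [::] [::] [::].

Local Notation cheap_upto m := (cheap (cost_tables m)).

Lemma cheap_0 m : 0 \in cheap_upto m.
Proof. by case: m => [|m]; rewrite /= inE eqxx. Qed.

Lemma cheap_nonneg_cheap m x : x \in cheap_nonneg (cost_tables m) -> x \in cheap_upto m.
Proof. by case: m => [//|m] x_in; rewrite /= inE mem_cat x_in orbT. Qed.

Lemma cheap_neg_cheap m x : x \in cheap_neg (cost_tables m) -> x \in cheap_upto m.
Proof. by case: m => [//|m] x_in; rewrite /= inE mem_cat x_in !orbT. Qed.

Lemma cheap_nonneg_digit y m (n : nat) : y \in cheap_upto m ->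
  n%:Z + kz * y \in cheap_nonneg (cost_tables (m + 2 + n)).
Proof.
move=> y_in; elim: n => [|n IH].
  by rewrite addn0 add0r addn2 /= mem_cat map_f.
rewrite addnS /= mem_cat; apply/orP; right.
have -> : n.+1%:Z + kz * y = 1 + (n%:Z + kz * y) by rewrite -addn1 PoszD; ring.
exact: map_f.
Qed.

Lemma cheap_neg_digit y m (n : nat) : y \in cheap_upto m ->
  - n.+1%:Z + kz * y \in cheap_neg (cost_tables (m + 3 + n)).
Proof.
move=> y_in; elim: n => [|n IH].
  by rewrite addn0 addn3 /= mem_cat; apply/orP; left; apply/map_f.
rewrite addnS /= mem_cat; apply/orP; right.
have -> : - n.+2%:Z + kz * y = -1 + (- n.+1%:Z + kz * y).
  by rewrite -[n.+2]addn1 PoszD; ring.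
exact: map_f.
Qed.

Lemma cheap_digit y m d : y \in cheap_upto m -> d + kz * y \in cheap_upto (m + 2 + `|d|).
Proof.
case: d => n y_in; first exact/cheap_nonneg_cheap/cheap_nonneg_digit.
have -> : (m + 2 + `|Negz n|)%N = (m + 3 + n)%N by rewrite /=; lia.
by apply/cheap_neg_cheap; rewrite NegzE; apply: cheap_neg_digit.
Qed.

Lemma digits_val_cheap ds m : (digits_cost ds <= m)%N -> digits_val k ds \in cheap_upto m.
Proof.
elim: ds m => [|d ds IH] m; first by rewrite cheap_0.
rewrite digits_cost_cons => cost_le.
have -> : m = ((m - 2 - `|d|) + 2 + `|d|)%N by lia.
by apply: cheap_digit; apply: IH; lia.
Qed.

Section Size.
Variable R : realFieldType.

(* The number of digit sequences of cost [m] grows like the tribonacci constant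
   (about 1.839); this invariant certifies the rate 1.9 for the recurrence of
   [cost_table_step]. *)
Let size_bound (m : nat) : Prop :=
  let s := cost_tables m in let P := (19/10 : R) ^+ m in
  [/\ (size (cheap s))%:R <= P, 19/10 * (size (cheap_prev s))%:R <= P,
      361/100 * (size (cheap_prev2 s))%:R <= P,
      9/10 * 19/10 * (size (cheap_nonneg s))%:R + 19/10 <= P &
      9/10 * 361/100 * (size (cheap_neg s))%:R + 361/100 <= P].

Let size_bound_step m : size_bound m -> size_bound m.+1.
Proof.
rewrite /size_bound /=; set s := cost_tables m; set P := (19/10 : R) ^+ m.
rewrite exprS -/P !size_cat !size_map !natrD.
have P_ge0 : 0 <= P by apply: exprn_ge0; lra.
have := ler0n R (size (cheap s)); have := ler0n R (size (cheap_prev s)).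
have := ler0n R (size (cheap_prev2 s)); have := ler0n R (size (cheap_nonneg s)).
have := ler0n R (size (cheap_neg s)).
by move=> ? ? ? ? ? [? ? ? ? ?]; split; lra.
Qed.

Lemma size_cheap m : (2 <= m)%N -> (size (cheap_upto m))%:R <= (19/10 : R) ^+ m.
Proof.
move=> m_ge2; suff [] : size_bound m by [].
rewrite -(subnK m_ge2); elim: (m - 2)%N => [|n IH]; last exact: size_bound_step.
by rewrite /size_bound /= !expr2; split; lra.
Qed.

End Size.
End CostTables.

Section UpperBound.
Variable k : nat.
Hypothesis k_gt0 : (0 < k)%N.
Local Notation K := (k%:R : rat).

Lemma classes0_sub_cheap n : classes0 k n `<=`
  [set conjclass k (y%:~R, 0) | y in [set` cheap (cost_tables k (n + 2))]].
Proof.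
move=> C [g [_ [-> [sub [[w [w_size w_in]] _]]]]].
have [/= _ g2] := sub _ (conjclass_refl k g).
case: g sub g2 w_in => x e _ /= ->; rewrite conjclass_Zinvk // => -[j w_eq].
have := cheap_expansion_word _ k_gt0 w; rewrite w_eq w_size.
move=> /(cheap_expansion_Zinvk _ k_gt0) [i [ds [ds_eq cost]]].
exists (digits_val k ds); first exact: digits_val_cheap.
rewrite /= -ds_eq mulrA -[K ^+ i]/(K ^ i%:Z) -expfzDr ?K_neq0 //.
by rewrite conjclass_scale // conjclass_Zinvk.
Qed.

Lemma classes0_finite n : finite_set (classes0 k n).
Proof.
apply: sub_finite_set (classes0_sub_cheap n) _.
exact/finite_image/finite_seq.
Qed.

Lemma c0_le_cheap n : (c0 k n <= size (cheap (cost_tables k (n + 2))))%N.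
Proof. exact: card_fset_set_le_size _ _ _ (classes0_sub_cheap n). Qed.

Lemma c0_eventually_le (R : realType) :
  exists N, forall n, (N <= n)%N -> ((c0 k n)%:R : R) <= (39/20) ^+ n.
Proof.
have [N dom] := geometric_dominance R (39/20) (19/10) ((19/10) ^+ 2) ltac:(lra).
exists N => n Nn; apply: le_trans (ltW (dom n Nn)).
rewrite -exprD addnC; apply: le_trans (size_cheap k R (n + 2) (leq_addl _ _)).
by rewrite ler_nat c0_le_cheap.
Qed.

End UpperBound.

Section BalancedInts.
Variable k : nat.
Local Notation kz := (k%:Z).

Definition unit_digit_ints (s : seq int) : seq int :=
  [seq 1 + kz * y | y <- s] ++ [seq -1 + kz * y | y <- s].

(* [balanced_ints m] lists the values [digits_val k ds] of the digit sequences [ds]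
   over [{-1, 0, 1}] with [digits_cost ds = m]. *)
Fixpoint balanced_ints (m : nat) : seq int :=
  match m with
  | 0 => [:: 0]
  | 1 => [::]
  | m'.+2 => [seq kz * y | y <- balanced_ints m'] ++
             (if m' is m''.+1 then unit_digit_ints (balanced_ints m'') else [::])
  end.

Lemma size_unit_digit_ints s : size (unit_digit_ints s) = (2 * size s)%N.
Proof. by rewrite size_cat !size_map mul2n -addnn. Qed.

Lemma size_balanced_ints m :
  size (balanced_ints m.+3) = (size (balanced_ints m.+1) + 2 * size (balanced_ints m))%N.
Proof.
have -> : balanced_ints m.+3 =
  [seq kz * y | y <- balanced_ints m.+1] ++ unit_digit_ints (balanced_ints m) by [].
by rewrite size_cat size_unit_digit_ints size_map.
Qed.

Lemma size_balanced_ints_ge (R : realFieldType) n :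
  (7/5 : R) ^+ n / 2 <= (size (balanced_ints n.+2))%:R.
Proof.
suff [] : [/\ (7/5 : R) ^+ n / 2 <= (size (balanced_ints n.+2))%:R,
  (7/5 : R) ^+ n.+1 / 2 <= (size (balanced_ints n.+3))%:R &
  (7/5 : R) ^+ n.+2 / 2 <= (size (balanced_ints n.+4))%:R] by [].
elim: n => [|n [IH0 IH1 IH2]]; first by rewrite /= !expr2 expr1 expr0; split; lra.
split=> //; rewrite size_balanced_ints natrD natrM !exprS.
have : 0 <= (7/5 : R) ^+ n by apply: exprn_ge0; lra.
move: IH0 IH1; rewrite exprS; lra.
Qed.

Definition word_realizes (m : nat) (y : int) :=
  exists2 w, size w = m & word_eval k w = (y%:~R, 0).

Lemma word_realizes_mulk m y : word_realizes m y -> word_realizes m.+2 (kz * y).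
Proof.
move=> [w w_size w_y]; exists (Lt :: rcons w LtI); first by rewrite /= size_rcons w_size.
by rewrite /= word_eval_rcons_tI mul_letter_t w_y /= rmorphM addrC subrK.
Qed.

Lemma word_realizes_pm1_add m y e : (e == 1) || (e == -1) ->
  word_realizes m y -> word_realizes m.+1 (e + y).
Proof.
move=> e_pm1 [w w_size w_y].
case/orP: e_pm1 => /eqP ->; [exists (La :: w) | exists (LaI :: w)] => //=;
  by rewrite ?w_size // ?(mul_letter_a, mul_letter_aI) w_y rmorphD.
Qed.

Lemma balanced_ints_realized m y : y \in balanced_ints m -> word_realizes m y.
Proof.
elim/ltn_ind: m y => -[|[|m]] IH y //=.
  by rewrite inE => /eqP ->; exists [::].
rewrite mem_cat => /orP[/mapP [y' y'_in ->]|].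
  by apply/word_realizes_mulk/IH.
case: m IH => [//|m] IH; rewrite mem_cat => /orP[] /mapP [y' y'_in ->].
all: apply: word_realizes_pm1_add; first by rewrite eqxx ?orbT.
all: by apply/word_realizes_mulk/(IH m (leqW (leqW (ltnSn m)))).
Qed.

End BalancedInts.

Lemma has_map_mem_map {A B T : eqType} (f : A -> T) (g : B -> T) s t :
  (forall a b, f a != g b) -> ~~ has (mem (map f s)) (map g t).
Proof.
move=> f_neq_g; apply/hasPn => _ /mapP [b _ ->]; apply/mapP => -[a _ fa].
by move: (f_neq_g a b); rewrite fa eqxx.
Qed.

Section BalancedIntsUniq.
Variable k : nat.
Hypothesis k_gt2 : (2 < k)%N.
Local Notation kz := (k%:Z).
Local Notation unit_digit_ints := (unit_digit_ints k).
Local Notation balanced_ints := (balanced_ints k).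

Lemma ndvdz_pm1_add (e y : int) : (e == 1) || (e == -1) -> ~~ (kz %| e + kz * y)%Z.
Proof.
move=> e_pm1; rewrite rpredDr ?dvdz_mulr ?dvdzz //.
by case/orP: e_pm1 => /eqP ->; rewrite ?rpredN dvdz1 absz_nat; lia.
Qed.

Lemma ndvdz_unit_digit_ints s y : y \in unit_digit_ints s -> ~~ (kz %| y)%Z.
Proof. by rewrite mem_cat => /orP[] /mapP [a _ ->]; apply: ndvdz_pm1_add. Qed.

Lemma mulz_neq_pm1_add (a b e : int) : (e == 1) || (e == -1) -> kz * a != e + kz * b.
Proof.
move=> e_pm1; apply/eqP => eq_ab.
by move: (ndvdz_pm1_add _ b e_pm1); rewrite -eq_ab dvdz_mulr ?dvdzz.
Qed.

Lemma add1_neq_addN1 (a b : int) : 1 + kz * a != -1 + kz * b.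
Proof.
apply/eqP => eq_ab; have two_eq : kz * (b - a) = 2%Z by rewrite mulrBr; lia.
have : (kz %| 2)%Z by rewrite -two_eq dvdz_mulr ?dvdzz.
by rewrite dvdzE absz_nat => /dvdn_leq; lia.
Qed.

Lemma balanced_ints_uniq m : uniq (balanced_ints m).
Proof.
have kz_inj : injective (fun y : int => kz * y) by apply: mulfI; lia.
have add_inj e : injective (fun y : int => e + kz * y) by move=> y y' /addrI /kz_inj.
elim/ltn_ind: m => -[|[|m]] IH //=.
have uniq_m := IH m ltac:(lia).
rewrite cat_uniq map_inj_uniq // uniq_m /=; case: m IH uniq_m => [|m] IH uniq_m.
  by rewrite andbT.
have uniq_m' := IH m ltac:(lia).
rewrite /unit_digit_ints cat_uniq !map_inj_uniq // uniq_m' has_cat negb_or !andbT.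
by rewrite !has_map_mem_map // => a b;
  rewrite ?add1_neq_addN1 // mulz_neq_pm1_add ?eqxx ?orbT.
Qed.

End BalancedIntsUniq.

Section LowerBoundCount.
Variable k : nat.
Hypothesis k_gt2 : (2 < k)%N.

Let k_gt0 : (0 < k)%N. Proof. exact: ltnW (ltnW k_gt2). Qed.

Lemma classes0_trivIset : trivIset [set: nat] (classes0 k).
Proof.
move=> i j _ _ [C [[g [_ [_ [_ len_i]]]] [g' [_ [_ [_ len_j]]]]]].
exact: class_length_unique len_i len_j.
Qed.

Lemma sum_c0_ge m :
  (size (unit_digit_ints k (balanced_ints k m)) <= \sum_(j < m.+4) c0 k j)%N.
Proof.
rewrite /c0 trivIset_sum_card; [|exact: classes0_finite|exact: classes0_trivIset].
rewrite -bigcup_mkord.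
apply: (size_le_card_fset_set _ _ (fun y => conjclass k (y%:~R, 0))).
- by apply: bigcup_finite => // i _; apply: classes0_finite.
- by have := balanced_ints_uniq _ k_gt2 m.+3; rewrite cat_uniq => /and3P[].
- move=> y y' y_in y'_in; apply: conjclass_int_inj => //.
    exact: ndvdz_unit_digit_ints _ k_gt2 _ _ y_in.
  exact: ndvdz_unit_digit_ints _ k_gt2 _ _ y'_in.
- move=> y y_in; have : y \in balanced_ints k m.+3 by rewrite mem_cat y_in orbT.
  move=> /balanced_ints_realized [w w_size w_y].
  have [j j_le j_class] := classes0_conjclass_int _ k_gt0 _ _ w_y.
  by exists j => //=; rewrite -w_size ltnS.
Qed.

Lemma c0_frequently_ge (R : realType) N :
  exists2 n, (N <= n)%N & (27/20 : R) ^+ n <= (c0 k n)%:R.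
Proof.
apply: (frequently_ge_of_partial_sums _ (fun n => (c0 k n)%:R) (7/5) (27/20) 6).
  lra.
move=> n; apply: (@le_trans _ _ (size (unit_digit_ints k (balanced_ints k n.+2)))%:R).
  by rewrite size_unit_digit_ints natrM; have := size_balanced_ints_ge k R n; lra.
by rewrite -natr_sum ler_nat sum_c0_ge.
Qed.

End LowerBoundCount.

Theorem corollary3p4 (R : realType) (r : nat) (hr : (1 <= r)%N) :
  ((4 / 3 : R)%:E < growth0 R (2 * r + 1) < (2 : R)%:E)%E.
Proof.
have k_gt2 : (2 < 2 * r + 1)%N by lia.
have k_gt0 : (0 < 2 * r + 1)%N by rewrite addn1.
rewrite /growth0; apply/andP; split.
  apply: (@lt_le_trans _ _ (27/20 : R)%:E); first by rewrite lte_fin; lra.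
  apply: limn_esup_root_ge => [|n|]; [lra | exact: ler0n | exact: c0_frequently_ge].
apply: (@le_lt_trans _ _ (39/20 : R)%:E); last by rewrite lte_fin; lra.
have [N c0_le] := c0_eventually_le _ k_gt0 R.
by apply: (limn_esup_root_le _ _ _ N) => [|n /c0_le ->]; rewrite ?ler0n //; lra.
Qed.
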